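(* Let $\alpha:=\int_{\Omega}\frac{dx}{p(x)}$ and $e:=\exp(1)$. If $\alpha e<m<l$, then \[ \Vert u\Vert_{mp(x)}\leq\Vert u\Vert_{lp(x)}\quad\forall\,u\in L^{lp(x)}(\Omega). \]
   Context: $\Omega\subset\mathbb{R}^N$ is a bounded domain; $p\in C^{1}(\overline{\Omega})$ with $1<\inf p\le\sup p<\infty$. For a continuous exponent $r$, $\Vert u\Vert_{r(x)}=\inf\{\gamma>0:\int_{\Omega}|u/\gamma|^{r(x)}\frac{dx}{r(x)}\leq1\}$ (Luxemburg norm), and $L^{r(x)}(\Omega)$ is the space of measurable $u$ with $\int_\Omega|u|^{r(x)}dx<\infty$. *)

From HB Require Import structures.
From mathcomp Require Import all_boot all_order all_algebra.
From mathcomp Require Import all_classical all_reals all_analysis.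
Set Implicit Arguments. Unset Strict Implicit. Unset Printing Implicit Defensive.
Import Order.TTheory GRing.Theory Num.Theory.
Import numFieldNormedType.Exports.
Local Open Scope classical_set_scope.
Local Open Scope ring_scope.

(* R^N is modelled as the row-vector type 'rV[R]_N (with its normed/topological
   structure from matrix_normedtype).  We equip it with the Borel sigma-algebra,
   i.e. the sigma-algebra generated by the coordinate maps. *)
Definition rv_coord (R : realType) (N : nat) (i : 'I_N) (x : 'rV[R]_N) : R :=
  x ord0 i.

Section rV_measurable.
Context (R : realType) (N : nat).
Let coors : 'I_N -> 'rV[R]_N -> R := @rv_coord R N.
Let s0 : g_sigma_preimage coors set0.
Proof. exact: sigma_algebra0. Qed.
Let sC A : g_sigma_preimage coors A -> g_sigma_preimage coors (~` A).
Proof. exact: sigma_algebraC. Qed.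
Let sU (F : (set 'rV[R]_N)^nat) : (forall i, g_sigma_preimage coors (F i)) ->
  g_sigma_preimage coors (\bigcup_i (F i)).
Proof. exact: sigma_algebra_bigcup. Qed.
HB.instance Definition _ := @isMeasurable.Build (measure_tuple_display default_measure_display)
  'rV[R]_N (g_sigma_preimage coors) s0 sC sU.
End rV_measurable.

(* By uniqueness of
   the extension, this characterizes Lebesgue measure on Borel sets. *)
Definition is_lebesgue_measureN (R : realType) (N : nat)
    (mu : {measure set 'rV[R]_N -> \bar R}) : Prop :=
  forall a b : 'rV[R]_N, (forall i, a ord0 i <= b ord0 i) ->
    mu [set x | forall i, a ord0 i <= x ord0 i <= b ord0 i] =
    (\prod_(i < N) (b ord0 i - a ord0 i))%:E.

Definition bounded_domain (R : realType) (N : nat) (Omega : set 'rV[R]_N) :=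
  [/\ Omega !=set0, open Omega, connected Omega & bounded_set Omega].

Definition C1_closure (R : realType) (N : nat) (Omega : set 'rV[R]_N)
    (p : 'rV[R]_N -> R) : Prop :=
  [/\ forall x, Omega x -> differentiable p x,
      {within closure Omega, continuous p} &
      forall i : 'I_N, exists g : 'rV[R]_N -> R,
        {within closure Omega, continuous g} /\
        forall x, Omega x -> 'D_(delta_mx ord0 i) p x = g x].

Definition lux_norm (R : realType) (N : nat)
    (mu : {measure set 'rV[R]_N -> \bar R}) (Omega : set 'rV[R]_N)
    (r : 'rV[R]_N -> R) (u : 'rV[R]_N -> R) : \bar R :=
  ereal_inf [set g%:E | g in [set g : R | 0 < g /\
     (\int[mu]_(x in Omega) ((`|u x / g| `^ r x) / r x)%:E <= 1)%E]].

Definition in_Lvar (R : realType) (N : nat)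
    (mu : {measure set 'rV[R]_N -> \bar R}) (Omega : set 'rV[R]_N)
    (r : 'rV[R]_N -> R) (u : 'rV[R]_N -> R) : Prop :=
  measurable_fun Omega u /\
  (\int[mu]_(x in Omega) (`|u x| `^ r x)%:E < +oo)%E.

(* For s = m/l < 1 the concave power y |-> y^s lies below its tangent at any
   c > 0: y^s <= c^s (s y/c + 1 - s).  Taking y = |u/g|^(l p(x)), dividing by
   m p(x) and integrating bounds the modular rho_r(v) = int |v|^r / r of u/g:
     rho_(m p)(u/g) <= c^(s-1) rho_(l p)(u/g) + c^s (1 - s) alpha / m.
   If rho_(l p)(u/g) <= 1 and alpha <= m/e, the choice c = e/s makes the right
   side (e/s)^s / e, which is at most 1 because s (1 - ln s) <= 1. *)

From HB Require Import structures.
From mathcomp Require Import all_boot all_order all_algebra.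
From mathcomp Require Import all_classical all_reals all_analysis.
From mathcomp Require Import lra ring measurable_realfun.
Set Implicit Arguments.
Unset Strict Implicit.
Unset Printing Implicit Defensive.

Import Order.TTheory GRing.Theory Num.Theory.
Import numFieldNormedType.Exports.
Local Open Scope classical_set_scope.
Local Open Scope ring_scope.

Section powR_inequalities.
Variable R : realType.
Implicit Types y z c q s m l : R.

Lemma powR_le_tangent y s : 0 <= y -> 0 < s < 1 -> y `^ s <= s * y + (1 - s).
Proof.
move=> y0 /andP[s0 s1].
(* Young's inequality for y^s and 1 with conjugate exponents 1/s, 1/(1-s). *)
have := @conjugate_powR R (y `^ s) 1 s^-1 (1 - s)^-1 (powR_ge0 _ _) ler01.
rewrite !invr_gt0 s0 subr_gt0 s1 !invrK addrC subrK mulr1 powR1 -powRrM.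
by rewrite mulfV ?gt_eqF // powRr1 // mul1r mulrC; apply.
Qed.

Lemma powR_le_scaled_tangent y c s : 0 <= y -> 0 < c -> 0 < s < 1 ->
  y `^ s <= c `^ s * (s * (y / c) + (1 - s)).
Proof.
move=> y0 c0 s01; rewrite -{1}(divfK (lt0r_neq0 c0) y).
rewrite powRM ?divr_ge0 ?(ltW c0) // mulrC ler_pM2l ?powR_gt0 //.
by rewrite powR_le_tangent ?divr_ge0 ?(ltW c0).
Qed.

Lemma powR_expR1_div_le s : 0 < s <= 1 -> (expR 1 / s) `^ s <= expR 1.
Proof.
move=> /andP[s0 s1]; rewrite /powR gt_eqF ?divr_gt0 ?expR_gt0 // ler_expR.
rewrite ln_div ?posrE ?expR_gt0 // expRK.
have sV0 : 0 < s^-1 by rewrite invr_gt0.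
have : ln s^-1 <= s^-1 - 1 by rewrite -[X in ln X](subrKC 1) le_ln1Dx //; lra.
rewrite lnV ?posrE // -(ler_pM2l s0) mulrBr mulfV ?gt_eqF // mulr1; lra.
Qed.

Lemma lower_exponent_integrand_le z q m l c :
  0 <= z -> 0 < q -> 0 < m < l -> 0 < c ->
  z `^ (m * q) / (m * q) <=
  c `^ (m / l) / c * (z `^ (l * q) / (l * q)) +
  c `^ (m / l) * (1 - m / l) / m * (1 / q).
Proof.
move=> z0 q0 /andP[m0 ml] c0; have l0 : 0 < l := lt_trans m0 ml.
have s01 : 0 < m / l < 1 by rewrite divr_gt0 // ltr_pdivrMr // mul1r ml.
have -> : z `^ (m * q) = (z `^ (l * q)) `^ (m / l).
  by rewrite -powRrM; congr (_ `^ _); field; rewrite gt_eqF.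
have mq0 : 0 < m * q by rewrite mulr_gt0.
set Y := z `^ (l * q); set s := m / l.
rewrite (_ : _ + _ = c `^ s * (s * (Y / c) + (1 - s)) / (m * q)); last first.
  by rewrite /s; field; rewrite !gt_eqF.
by rewrite ler_pM2r ?invr_gt0 // powR_le_scaled_tangent ?powR_ge0.
Qed.

Lemma tangent_constants_le1 s m : 0 < s <= 1 -> 0 < m ->
  (expR 1 / s) `^ s / (expR 1 / s) +
  (expR 1 / s) `^ s * (1 - s) / m * (m / expR 1) <= 1.
Proof.
move=> s01 m0; have s0 : s != 0 by rewrite gt_eqF //; case/andP: s01.
have -> : (expR 1 / s) `^ s / (expR 1 / s) +
    (expR 1 / s) `^ s * (1 - s) / m * (m / expR 1) = (expR 1 / s) `^ s / expR 1.
  by field; rewrite s0 !gt_eqF ?expR_gt0.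
by rewrite ler_pdivrMr ?expR_gt0 // mul1r powR_expR1_div_le.
Qed.

End powR_inequalities.

Lemma measurable_fun_powR d (T : measurableType d) (R : realType) (D : set T)
    (f g : T -> R) :
  measurable D -> measurable_fun D f -> measurable_fun D g ->
  measurable_fun D (fun x => f x `^ g x).
Proof.
move=> mD mf mg; have mg0 := measurable_fun_eqr mg (measurable_cst (0 : R)).
have onD E h : measurable_fun D h -> measurable_fun (D `&` E) h.
  exact: measurable_funS mD (@subIsetl _ D E).
(* [a `^ r] unfolds to [if a == 0 then (r == 0)%:R else expR (r * ln a)]. *)
apply: measurable_fun_if => //.
- exact: measurable_fun_eqr mf (measurable_cst (0 : R)).
- apply: (measurableT_comp (f := fun b : bool => b%:R : R)
    (g := fun x => g x == 0)) => //.
  exact: onD mg0.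
- apply: measurableT_comp; first exact: measurable_expR.
  apply: measurable_funM; first exact: onD mg.
  by apply: measurableT_comp; [exact: measurable_ln|exact: onD mf].
Qed.

Definition modular {d} {T : measurableType d} {R : realType}
    (mu : {measure set T -> \bar R}) (D : set T) (r v : T -> R) : \bar R :=
  \int[mu]_(x in D) ((`|v x| `^ r x) / r x)%:E.

Section modular.
Context d (T : measurableType d) (R : realType).
Variable mu : {measure set T -> \bar R}.
Variable D : set T.
Hypothesis mD : measurable D.

Lemma measurable_funV_ge0 (f : T -> R) : measurable_fun D f ->
  (forall x, D x -> 0 <= f x) -> measurable_fun D (fun x => (f x)^-1).
Proof.
move=> mf f0; apply: (eq_measurable_fun (fun x => f x `^ (-1))).
  by move=> x /set_mem Dx; rewrite powR_inv1 // f0.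
exact: measurable_fun_powR mD mf (measurable_cst _).
Qed.

Lemma ge0_le_integral_lincomb (f g h : T -> R) (a b : R) : 0 <= a -> 0 <= b ->
  measurable_fun D f -> measurable_fun D g -> measurable_fun D h ->
  (forall x, D x -> 0 <= f x) -> (forall x, D x -> 0 <= g x) ->
  (forall x, D x -> 0 <= h x) ->
  (forall x, D x -> h x <= a * f x + b * g x) ->
  (\int[mu]_(x in D) (h x)%:E <=
   a%:E * \int[mu]_(x in D) (f x)%:E + b%:E * \int[mu]_(x in D) (g x)%:E)%E.
Proof.
move=> a0 b0 mf mg mh f0 g0 h0 hfg.
have mEf : measurable_fun D (EFin \o f) by exact/measurable_EFinP.
have mEg : measurable_fun D (EFin \o g) by exact/measurable_EFinP.
have Ef0 x : D x -> (0 <= (f x)%:E)%E by rewrite lee_fin => /f0.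
have Eg0 x : D x -> (0 <= (g x)%:E)%E by rewrite lee_fin => /g0.
rewrite -ge0_integralZl_EFin // -ge0_integralZl_EFin // -ge0_integralD //;
  last 4 first.
- by move=> x /Ef0; exact: mule_ge0.
- exact: emeasurable_funM (measurable_cst _) mEf.
- by move=> x /Eg0; exact: mule_ge0.
- exact: emeasurable_funM (measurable_cst _) mEg.
apply: ge0_le_integral => //.
- exact/measurable_EFinP.
- exact: emeasurable_funD (emeasurable_funM (measurable_cst _) mEf)
    (emeasurable_funM (measurable_cst _) mEg).
Qed.

Lemma measurable_modular_integrand (r v : T -> R) :
  measurable_fun D r -> (forall x, D x -> 0 <= r x) -> measurable_fun D v ->
  measurable_fun D (fun x => `|v x| `^ r x / r x).
Proof.
move=> mr r0 mv; apply: measurable_funM; last exact: measurable_funV_ge0.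
apply: measurable_fun_powR => //.
exact: measurableT_comp (@normr_measurable _ _) mv.
Qed.

Lemma modular_le1_lower_exponent (p v : T -> R) (m l : R) :
  measurable_fun D p -> (forall x, D x -> 0 < p x) -> measurable_fun D v ->
  0 < m < l ->
  (\int[mu]_(x in D) (1 / p x)%:E * (expR 1)%:E <= m%:E)%E ->
  (modular mu D (fun x => (l * p x)%R) v <= 1)%E ->
  (modular mu D (fun x => (m * p x)%R) v <= 1)%E.
Proof.
move=> mp p0 mv /andP[m0 ml] alpha_le modl_le1.
have l0 : 0 < l := lt_trans m0 ml.
have s01 : 0 < m / l <= 1 by rewrite divr_gt0 // ler_pdivrMr // mul1r ltW.
set s := m / l in s01 *; set c := expR 1 / s.
have c0 : 0 < c by rewrite divr_gt0 ?expR_gt0 //; case/andP: s01.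
have mkp k : 0 < k -> measurable_fun D (fun x => k * p x).
  by move=> k0; apply: measurable_funM => //; exact: measurable_cst.
have kp0 k : 0 < k -> forall x, D x -> 0 <= k * p x.
  by move=> k0 x Dx; rewrite mulr_ge0 ?ltW ?p0.
have modk_ge0 k : 0 < k ->
    forall x, D x -> 0 <= `|v x| `^ (k * p x) / (k * p x).
  by move=> k0 x Dx; rewrite divr_ge0 ?powR_ge0 ?kp0.
have mmod k : 0 < k ->
    measurable_fun D (fun x => `|v x| `^ (k * p x) / (k * p x)).
  by move=> k0; apply: measurable_modular_integrand; [exact: mkp|exact: kp0|].
have minvp : measurable_fun D (fun x => 1 / p x).
  under eq_fun do rewrite div1r.
  by apply: measurable_funV_ge0 => // x Dx; rewrite ltW ?p0.
have a0 : 0 <= c `^ s / c by rewrite divr_ge0 ?powR_ge0 ?(ltW c0).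
have b0 : 0 <= c `^ s * (1 - s) / m.
  case/andP: s01 => _ s1.
  by rewrite divr_ge0 ?mulr_ge0 ?powR_ge0 ?subr_ge0 ?(ltW m0).
have pointwise x : D x -> `|v x| `^ (m * p x) / (m * p x) <=
    c `^ s / c * (`|v x| `^ (l * p x) / (l * p x)) +
    c `^ s * (1 - s) / m * (1 / p x).
  by move=> Dx; apply: lower_exponent_integrand_le; rewrite ?p0 ?m0 ?ml.
have invp_ge0 x : D x -> 0 <= 1 / p x.
  by move=> Dx; rewrite div1r invr_ge0 ltW ?p0.
have := ge0_le_integral_lincomb a0 b0 (mmod _ l0) minvp (mmod _ m0)
  (modk_ge0 _ l0) invp_ge0 (modk_ge0 _ m0) pointwise.
move/le_trans; apply.
rewrite -lee_pdivlMr ?expR_gt0 // in alpha_le.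
apply: le_trans (_ : (c `^ s / c)%:E * 1 +
  (c `^ s * (1 - s) / m)%:E * (m / expR 1)%:E <= _)%E.
  by apply: leeD; apply: lee_wpmul2l; rewrite ?lee_fin.
by rewrite mule1 -EFinM -EFinD lee_fin tangent_constants_le1.
Qed.

End modular.

Section rV_borel.
Variables (R : realType) (N : nat).
Implicit Types (A : set 'rV[R]_N) (x c : 'rV[R]_N).

Lemma measurable_rv_coord (i : 'I_N) :
  measurable_fun [set: 'rV[R]_N] (@rv_coord R N i).
Proof.
move=> _ Y mY; rewrite setTI; apply: sub_sigma_algebra.
rewrite -bigcup_seq; exists i; first by rewrite /= mem_index_enum.
by exists Y => //; rewrite setTI.
Qed.

Lemma ball_rVE c e x :
  ball c e x <-> 0 < e /\ forall i, `|c ord0 i - x ord0 i| < e.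
Proof.
split=> -[e0 h]; split=> // i; first exact: h.
by move=> j; rewrite (ord1 i); exact: h.
Qed.

Lemma measurable_ball_rV c e : measurable (ball c e).
Proof.
have [e0|e0] := ltP 0 e; last first.
  suff -> : ball c e = set0 by exact: measurable0.
  by apply/seteqP; split=> x // /ball_rVE[/lt_le_trans/(_ e0)]; rewrite ltxx.
have -> : ball c e = \bigcap_(i in [set: 'I_N])
    (@rv_coord R N i @^-1` `](c ord0 i - e), (c ord0 i + e)[%classic).
  apply/seteqP; split=> x.
    by move=> /ball_rVE[_ h] i _; rewrite /= in_itv /= -ltr_distlC h.
  move=> h; apply/ball_rVE; split=> // i.
  by have := h i I; rewrite /= in_itv /= -ltr_distlC.
apply: fin_bigcap_measurable; first exact: finite_finset.
move=> i _; rewrite -[X in measurable X]setTI.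
by apply: measurable_rv_coord => //; exact: measurable_itv.
Qed.

Definition rat_ball (q : 'rV[rat]_N * rat) : set 'rV[R]_N :=
  ball (map_mx ratr q.1 : 'rV[R]_N) (ratr q.2).

Lemma open_rat_ball_cover A x : open A -> A x ->
  exists q, rat_ball q `<=` A /\ rat_ball q x.
Proof.
move=> oA Ax; have /nbhs_ballP[e e0 xeA] : nbhs x A by exact: open_nbhs_nbhs.
have [r] : exists r : rat, ratr r \in `]0, e / 2[.
  by apply: rat_in_itvoo; rewrite divr_gt0.
rewrite in_itv /= => /andP[r0 re].
have /choice[q hq] : forall i, exists q : rat,
    ratr q \in `](x ord0 i - ratr r), (x ord0 i + ratr r)[.
  by move=> i; apply: rat_in_itvoo; rewrite ltrD2l gtrN.
have xq : ball x (ratr r) (map_mx ratr (\row_i q i)).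
  apply/ball_rVE; split=> // i; rewrite !mxE ltr_distlC.
  by have := hq i; rewrite in_itv.
exists (\row_i q i, r); split; last exact: ball_sym.
move=> y /(ball_triangle xq) xy; apply: xeA; apply: le_ball xy; lra.
Qed.

Lemma open_measurable_rV A : open A -> measurable A.
Proof.
move=> oA; have -> : A = \bigcup_(q in [set q | rat_ball q `<=` A]) rat_ball q.
  apply/seteqP; split=> [x Ax|x [q qA]]; last exact: qA.
  by have [q [qA qx]] := open_rat_ball_cover oA Ax; exists q.
rewrite bigcup_mkcond.
apply: countable_bigcupT_measurable; first exact: countableP.
by move=> q; case: ifP => _; [exact: measurable_ball_rV|exact: measurable0].
Qed.

End rV_borel.

Lemma continuous_measurable_fun_rV (R : realType) (N : nat) (A : set 'rV[R]_N)
    (f : 'rV[R]_N -> R) :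
  open A -> {in A, continuous f} -> measurable_fun A f.
Proof.
move=> oA cf; apply: (measurability _ (RGenOpens.measurableE R)).
move=> _ [_ [a [b ->]] <-]; apply: open_measurable_rV.
rewrite openE => x [Ax /= fx]; apply: filterI.
  by move: oA; rewrite openE; apply.
apply: (cf x (mem_set Ax)); apply: open_nbhs_nbhs.
by split=> //; exact: interval_open.
Qed.

Lemma lux_norm_le_of_modular (R : realType) (N : nat)
    (mu : {measure set 'rV[R]_N -> \bar R}) (Omega : set 'rV[R]_N)
    (r r' u : 'rV[R]_N -> R) :
  (forall g, 0 < g -> (modular mu Omega r (fun x => (u x / g)%R) <= 1)%E ->
                      (modular mu Omega r' (fun x => (u x / g)%R) <= 1)%E) ->
  (lux_norm mu Omega r' u <= lux_norm mu Omega r u)%E.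
Proof.
move=> adm; apply: ereal_inf_le_tmp; apply: image_subset => g [g0 hg].
by split=> //; exact: adm.
Qed.

Theorem mainTheorem13 (R : realType) (N : nat) (hN : (0 < N)%N)
    (mu : {measure set 'rV[R]_N -> \bar R}) (hmu : is_lebesgue_measureN mu)
    (Omega : set 'rV[R]_N) (hOmega : bounded_domain Omega)
    (p : 'rV[R]_N -> R) (hpC1 : C1_closure Omega p)
    (hpbnd : exists pm pM : R, 1 < pm /\ forall x, Omega x -> pm <= p x <= pM)
    (m l : R)
    (hml : ((\int[mu]_(x in Omega) (1 / p x)%:E) * (expR 1)%:E < m%:E)%E)
    (hml' : m < l) :
  forall u : 'rV[R]_N -> R, in_Lvar mu Omega (fun x => (l * p x)%R) u ->
    (lux_norm mu Omega (fun x => (m * p x)%R) u <=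
     lux_norm mu Omega (fun x => (l * p x)%R) u)%E.
Proof.
move=> u [mu_meas _].
have [_ oOmega _ _] := hOmega.
have [p_diff _ _] := hpC1.
have [pm [pM [pm_gt1 p_bnd]]] := hpbnd.
have p_gt0 x : Omega x -> 0 < p x.
  case/p_bnd/andP => pm_le _.
  exact: lt_le_trans (lt_trans ltr01 pm_gt1) pm_le.
have mOmega := open_measurable_rV oOmega.
have mp : measurable_fun Omega p.
  apply: continuous_measurable_fun_rV oOmega _ => x /set_mem Ox.
  exact: differentiable_continuous (p_diff x Ox).
have m_gt0 : 0 < m.
  rewrite -lte_fin; apply: le_lt_trans hml.
  rewrite mule_ge0 ?lee_fin ?expR_ge0 //.
  by apply: integral_ge0 => x Ox; rewrite lee_fin divr_ge0 ?ltW ?p_gt0.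
apply: lux_norm_le_of_modular => g g_gt0.
apply: modular_le1_lower_exponent => //.
- by apply: measurable_funM => //; exact: measurable_cst.
- by rewrite m_gt0 hml'.
- exact: ltW.
Qed.
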